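(* Let $\rho=(r\colon L\rightharpoonup R,U)$ be a universally quantified rule such that for every $u\in U$, writing $(\mathrm{id}_L,r)\oplus u=(\pi_u\colon L\to\overline L_u,\gamma_u\colon\overline L_u\rightharpoonup\overline R_u)$ with outer pushout morphism $\alpha_u\colon R\rightharpoonup\overline R_u$, every edge of $\overline R_u$ without preimage under $\alpha_u$ is incident to some node of $\overline R_u$ without preimage under $\alpha_u$. Let $G$ be a graph. Then for every instantiation $(\pi,\gamma\colon\overline L\rightharpoonup\overline R)$ of $\rho$ of length greater than $|V_G|$, every subgraph morphism $\nu\colon\overline R\rightharpoonup R'$, every total injective $m\colon R'\to G$ and every pushout complement $H$ of $\nu\circ\gamma$ and $m$ (with total injective morphism $\overline L\to H$), there exist an instantiation $(\pi^\ast,\gamma^\ast\colon\overline L^\ast\rightharpoonup\overline R^\ast)$ of $\rho$ of length at most $|V_G|$, a subgraph morphism $\nu^\ast\colon\overline R^\ast\rightharpoonup R'$ and a pushout complement $H^\ast$ of $\nu^\ast\circ\gamma^\ast$ and $m$ with $H^\ast\sqsubseteq H$. In other words, $|V_G|$ is a valid bound on the length of instantiations needed in a backward step from $G$.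
   Context: Fix a finite label set $\Lambda$ with arity function $\mathrm{ar}\colon\Lambda\to\mathbb N$. A (hyper)graph $G=(V_G,E_G,c_G,l_G)$ consists of finite sets $V_G$ (nodes) and $E_G$ (edges), a connection function $c_G\colon E_G\to V_G^*$ and a labelling $l_G\colon E_G\to\Lambda$ with $|c_G(e)|=\mathrm{ar}(l_G(e))$; an edge $e$ is incident to a node $v$ if $v$ occurs in $c_G(e)$. A morphism $\phi\colon G\rightharpoonup G'$ is a pair of partial functions $\phi_V,\phi_E$ such that whenever $\phi_E(e)$ is defined, $\phi_V$ is defined on all nodes incident to $e$, $l_{G'}(\phi_E(e))=l_G(e)$ and $\phi_V(c_G(e))=c_{G'}(\phi_E(e))$. ''Total'' means defined everywhere. Pushouts are taken in the category of graphs and partial morphisms (always exist, unique up to isomorphism; concretely: quotient of $G_1\sqcup G_2$ by the smallest equivalence identifying $\phi(x)$ and $\psi(x)$ for $x\in G_0$, dropping classes containing the image of an $x\in G_0$ on which $\phi$ or $\psi$ is undefined and edge classes incident to dropped node classes). Given $a\colon A\rightharpoonup B$ and $b\colon B\rightharpoonup D$, a pushout complement of $a$ and $b$ is a graph $C$ with morphisms $c\colon A\rightharpoonup C$, $d\colon C\rightharpoonup D$ such that $D$ with $b,d$ is a pushout of $a,c$. A subgraph morphism is an injective and surjective morphism; $G_1\sqsubseteq G_2$ if there is a subgraph morphism $G_2\rightharpoonup G_1$. A universally quantified rule is $\rho=(r,U)$ with $r\colon L\rightharpoonup R$ and $U$ a finite set of pairs $u=(p_u,q_u)$, $p_u\colon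 L\to L_u$ total injective, $q_u\colon L_u\rightharpoonup R_u$, such that for every $x\in L$, $q_u(p_u(x))$ is defined and has exactly one preimage under $q_u$; $Q(u)$ is the set of $v\in V_L$ such that some edge incident to $p_u(v)$ has no preimage under $p_u$, required nonempty. Instantiations $(\pi\colon L\to\overline L$ total injective, $\gamma\colon\overline L\rightharpoonup\overline R)$ are defined recursively: $(\mathrm{id}_L,r)$ is one (length 0); if $(\pi,\gamma)$ is one of length $n$ and $u\in U$, let $\overline L_u$ with $p_u'\colon\overline L\to\overline L_u$, $\pi'\colon L_u\to\overline L_u$ be the pushout of $\pi,p_u$, let $\overline R_u$ with $\alpha\colon\overline R\rightharpoonup\overline R_u$, $\beta\colon R_u\rightharpoonup\overline R_u$ be the pushout of $\gamma\circ\pi$ and $q_u\circ p_u$ (this $\alpha$ is the ''outer pushout morphism''), and $\eta\colon\overline L_u\rightharpoonup\overline R_u$ the unique morphism with $\eta\circ p_u'=\alpha\circ\gamma$, $\eta\circ\pi'=\beta\circ q_u$; then $(\pi,\gamma)\oplus u:=(p_u'\circ\pi,\eta)$ is an instantiation of length $n+1$. *)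

From HB Require Import structures.
From mathcomp Require Import all_boot.
From Stdlib Require List.

Set Implicit Arguments.
Unset Strict Implicit.
Unset Printing Implicit Defensive.

Section Graphs.

Variable Lab : finType.
Variable ar : Lab -> nat.

Record graph := Graph {
  gV : finType;
  gE : finType;
  conn : gE -> seq gV;
  lab : gE -> Lab;
  conn_ar : forall e, size (conn e) = ar (lab e) }.

Definition is_morph (G H : graph) (fV : gV G -> option (gV H))
    (fE : gE G -> option (gE H)) : Prop :=
  forall e e', fE e = Some e' ->
    lab e' = lab e /\ map fV (conn e) = map Some (conn e').

Record morph (G H : graph) := Morph {
  mV : gV G -> option (gV H);
  mE : gE G -> option (gE H);
  mP : is_morph mV mE }.

Lemma idm_morphP (G : graph) : is_morph (G := G) (H := G) Some Some.
Proof. by move=> e e' [<-]. Qed.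

Definition idm (G : graph) : morph G G := Morph (@idm_morphP G).

Lemma comp_morphP (G H K : graph) (g : morph H K) (f : morph G H) :
  is_morph (fun v => obind (mV g) (mV f v)) (fun e => obind (mE g) (mE f e)).
Proof.
move=> e e''; case Hf: (mE f e) => [e'|] //= Hg.
have [l1 c1] := mP Hf; have [l2 c2] := mP Hg.
split; first by rewrite l2 l1.
by rewrite (map_comp (obind (mV g)) (mV f)) c1 -map_comp.
Qed.

Definition mcomp (G H K : graph) (g : morph H K) (f : morph G H) : morph G K :=
  Morph (@comp_morphP G H K g f).

Definition meq (G H : graph) (f g : morph G H) : Prop :=
  (forall v, mV f v = mV g v) /\ (forall e, mE f e = mE g e).

Definition totalm (G H : graph) (f : morph G H) : Prop :=
  (forall v, mV f v <> None) /\ (forall e, mE f e <> None).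

Definition pinj (A B : Type) (f : A -> option B) : Prop :=
  forall x y z, f x = Some z -> f y = Some z -> x = y.

Definition psurj (A B : Type) (f : A -> option B) : Prop :=
  forall z, exists x, f x = Some z.

Definition injm (G H : graph) (f : morph G H) : Prop :=
  pinj (mV f) /\ pinj (mE f).

Definition surjm (G H : graph) (f : morph G H) : Prop :=
  psurj (mV f) /\ psurj (mE f).

Definition subgraph_morph (G H : graph) (f : morph G H) : Prop :=
  injm f /\ surjm f.

Definition subgraph (G1 G2 : graph) : Prop :=
  exists f : morph G2 G1, subgraph_morph f.

Definition is_pushout (A B C D : graph) (a : morph A B) (c : morph A C)
    (b : morph B D) (d : morph C D) : Prop :=
  meq (mcomp b a) (mcomp d c) /\
  forall (D' : graph) (b' : morph B D') (d' : morph C D'),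
    meq (mcomp b' a) (mcomp d' c) ->
    exists u : morph D D',
      [/\ meq (mcomp u b) b', meq (mcomp u d) d' &
          forall u' : morph D D', meq (mcomp u' b) b' -> meq (mcomp u' d) d' ->
            meq u' u].

Record branch (L : graph) := Branch {
  Lu : graph;
  Ru : graph;
  pu : morph L Lu;
  qu : morph Lu Ru;
  pu_total : totalm pu;
  pu_inj : injm pu;
  qu_nodes : forall v : gV L, exists y,
      obind (mV qu) (mV pu v) = Some y /\
      forall w, mV qu w = Some y -> mV pu v = Some w;
  qu_edges : forall e : gE L, exists y,
      obind (mE qu) (mE pu e) = Some y /\
      forall w, mE qu w = Some y -> mE pu e = Some w;
  Q_nonempty : exists (v : gV L) (w : gV Lu), mV pu v = Some w /\
      exists e : gE Lu, w \in conn e /\ forall e0, mE pu e0 <> Some e }.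

Record rule := Rule {
  rL : graph;
  rR : graph;
  rr : morph rL rR;
  rU : seq (branch rL) }.

Inductive inst (rho : rule) :
    nat -> forall Lb Rb : graph, morph (rL rho) Lb -> morph Lb Rb -> Prop :=
| inst0 : @inst rho 0 _ _ (idm (rL rho)) (rr rho)
| instS : forall n (Lb Rb : graph) (pi : morph (rL rho) Lb) (ga : morph Lb Rb),
    @inst rho n _ _ pi ga ->
    forall u : branch (rL rho), List.In u (rU rho) ->
    forall (Lbu : graph) (p' : morph Lb Lbu) (pi' : morph (Lu u) Lbu),
    is_pushout pi (pu u) p' pi' ->
    forall (Rbu : graph) (al : morph Rb Rbu) (be : morph (Ru u) Rbu),
    is_pushout (mcomp ga pi) (mcomp (qu u) (pu u)) al be ->
    forall eta : morph Lbu Rbu,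
    meq (mcomp eta p') (mcomp al ga) -> meq (mcomp eta pi') (mcomp be (qu u)) ->
    @inst rho n.+1 _ _ (mcomp p' pi) eta.

(* Hypothesis of the lemma: for every u in U, with outer pushout morphism
   alpha_u : R ⇀ Rbar_u of (id_L, r) ⊕ u, every edge of Rbar_u without
   alpha_u-preimage is incident to a node of Rbar_u without alpha_u-preimage.
   (Only the outer pushout of r o id_L and q_u o p_u is relevant.) *)
Definition new_edges_attached (rho : rule) : Prop :=
  forall u : branch (rL rho), List.In u (rU rho) ->
  forall (Rbu : graph) (al : morph (rR rho) Rbu) (be : morph (Ru u) Rbu),
    is_pushout (mcomp (rr rho) (idm (rL rho))) (mcomp (qu u) (pu u)) al be ->
    forall e : gE Rbu, (forall e0, mE al e0 <> Some e) ->
      exists v : gV Rbu, v \in conn e /\ forall v0, mV al v0 <> Some v.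

End Graphs.

From HB Require Import structures.
From mathcomp Require Import all_boot.
From Stdlib Require Import Setoid Morphisms.
From Stdlib Require List.

Set Implicit Arguments.
Unset Strict Implicit.
Unset Printing Implicit Defensive.

(* By induction on the instantiation, for every set W of nodes of
   its right-hand side there is an embedded sub-instantiation that misses only
   items outside W or attached to a node outside W, and whose length is at
   most the number of nodes of W not coming from R. At a step with branch u,
   either a new node of the outer pushout lies in W, and the step is replayed
   on the sub-instantiation, or none does; then, by the hypothesis on the
   rule, every new edge is attached to a new node, so the step is skipped.
   For W the domain of nu the length is at most |V_R'| <= |V_G|; composing nu
   with the embedding gives nu*, and deleting from H the image of the skipped
   part of the left-hand side (with the edges left dangling) gives a pushout
   complement H* with H* below H. *)

Section Morphisms.
Variables (Lab : finType) (ar : Lab -> nat).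
Local Notation gr := (graph ar).

Definition imV (X Y : gr) (f : morph X Y) (y : gV Y) : bool :=
  [exists x, mV f x == Some y].
Definition imE (X Y : gr) (f : morph X Y) (e : gE Y) : bool :=
  [exists x, mE f x == Some e].

Lemma imVP (X Y : gr) (f : morph X Y) y :
  reflect (exists x, mV f x = Some y) (imV f y).
Proof. by apply: (iffP existsP) => -[x /eqP]; exists x. Qed.

Lemma imEP (X Y : gr) (f : morph X Y) e :
  reflect (exists x, mE f x = Some e) (imE f e).
Proof. by apply: (iffP existsP) => -[x /eqP]; exists x. Qed.

Lemma not_imV_comp (X Y Z : gr) (f : morph X Y) (g : morph Y Z) z :
  ~~ imV g z -> ~~ imV (mcomp g f) z.
Proof.
move=> /imVP gz; apply/imVP => -[x /=]; case: (mV f x) => //= y Hy.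
by apply: gz; exists y.
Qed.

Lemma morph_conn_def (X Y : gr) (f : morph X Y) e e' v :
  mE f e = Some e' -> v \in conn e -> mV f v <> None.
Proof.
move=> /mP[_ Hc] /(map_f (mV f)); rewrite Hc.
by case/mapP=> w _ ->.
Qed.

Lemma morph_conn_mem (X Y : gr) (f : morph X Y) e e' v w :
  mE f e = Some e' -> v \in conn e -> mV f v = Some w -> w \in conn e'.
Proof.
move=> /mP[_ Hc] /(map_f (mV f)) + Hv; rewrite Hc Hv.
by rewrite mem_map //; apply: Some_inj.
Qed.

Lemma morph_conn_memV (X Y : gr) (f : morph X Y) e e' w :
  mE f e = Some e' -> w \in conn e' -> exists2 v, v \in conn e & mV f v = Some w.
Proof.
move=> /mP[_ Hc] /(map_f Some); rewrite -Hc.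
by case/mapP=> v Hv Hw; exists v.
Qed.

Lemma neq_None_Some (T : Type) (o : option T) : o <> None -> exists y, o = Some y.
Proof. by case: o => [y|//]; exists y. Qed.

Lemma total_someV (X Y : gr) (f : morph X Y) :
  totalm f -> forall x, exists y, mV f x = Some y.
Proof. by case=> Hf _ x; case: (mV f x) (Hf x) => [y|//]; exists y. Qed.

Lemma total_someE (X Y : gr) (f : morph X Y) :
  totalm f -> forall x, exists y, mE f x = Some y.
Proof. by case=> _ Hf x; case: (mE f x) (Hf x) => [y|//]; exists y. Qed.

Lemma mcomp_total (X Y Z : gr) (f : morph X Y) (g : morph Y Z) :
  totalm f -> totalm g -> totalm (mcomp g f).
Proof.
move=> ft gt; split=> x /=.
  by have [y ->] := total_someV ft x; apply: gt.1.
by have [y ->] := total_someE ft x; apply: gt.2.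
Qed.

Lemma mcomp_inj (X Y Z : gr) (f : morph X Y) (g : morph Y Z) :
  injm f -> injm g -> injm (mcomp g f).
Proof.
move=> [fV fE] [gV gE]; split=> x y z /=.
  case Hx: (mV f x) => [a|] //= Ha; case Hy: (mV f y) => [b|] //= Hb.
  by apply: fV Hx _; rewrite (gV _ _ _ Ha Hb).
case Hx: (mE f x) => [a|] //= Ha; case Hy: (mE f y) => [b|] //= Hb.
by apply: fE Hx _; rewrite (gE _ _ _ Ha Hb).
Qed.

Lemma idm_total (X : gr) : totalm (idm X).
Proof. by []. Qed.

Lemma idm_inj (X : gr) : injm (idm X).
Proof. by split=> x y z [->] []. Qed.

Lemma meq_refl (X Y : gr) (f : morph X Y) : meq f f.
Proof. by []. Qed.

Lemma meq_sym (X Y : gr) (f g : morph X Y) : meq f g -> meq g f.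
Proof. by case=> HV HE; split=> x. Qed.

Lemma meq_trans (X Y : gr) (f g h : morph X Y) : meq f g -> meq g h -> meq f h.
Proof. by case=> HV HE [HV' HE']; split=> x; rewrite ?HV ?HE. Qed.

Lemma mcompA (X Y Z W : gr) (f : morph X Y) (g : morph Y Z) (h : morph Z W) :
  meq (mcomp h (mcomp g f)) (mcomp (mcomp h g) f).
Proof. by split=> x /=; [case: (mV f x) | case: (mE f x)]. Qed.

Lemma mcomp_congr (X Y Z : gr) (f f' : morph X Y) (g g' : morph Y Z) :
  meq f f' -> meq g g' -> meq (mcomp g f) (mcomp g' f').
Proof.
case=> fV fE [gV gE]; split=> x /=; rewrite ?fV ?fE.
  by case: (mV f' x).
by case: (mE f' x).
Qed.

Lemma mcomp_idl (X Y : gr) (f : morph X Y) : meq (mcomp (idm Y) f) f.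
Proof. by split=> x /=; [case: (mV f x) | case: (mE f x)]. Qed.

Lemma mcomp_idr (X Y : gr) (f : morph X Y) : meq (mcomp f (idm X)) f.
Proof. by []. Qed.

Lemma meq_someV (A B C D : gr) (f : morph A B) (g : morph B D)
    (f' : morph A C) (g' : morph C D) :
  meq (mcomp g f) (mcomp g' f') ->
  forall x y, mV f' x = Some y -> mV g' y = obind (mV g) (mV f x).
Proof. by move=> [H _] x y Hx; move: (H x) => /=; rewrite Hx. Qed.

Lemma meq_someE (A B C D : gr) (f : morph A B) (g : morph B D)
    (f' : morph A C) (g' : morph C D) :
  meq (mcomp g f) (mcomp g' f') ->
  forall x y, mE f' x = Some y -> mE g' y = obind (mE g) (mE f x).
Proof. by move=> [_ H] x y Hx; move: (H x) => /=; rewrite Hx. Qed.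

Lemma meq_comp_someV (X Y Z : gr) (f : morph X Y) (g : morph Y Z) (h : morph X Z) :
  meq (mcomp g f) h -> forall x y, mV f x = Some y -> mV g y = mV h x.
Proof. by move=> [H _] x y Hx; rewrite -H /= Hx. Qed.

Lemma meq_comp_someE (X Y Z : gr) (f : morph X Y) (g : morph Y Z) (h : morph X Z) :
  meq (mcomp g f) h -> forall x y, mE f x = Some y -> mE g y = mE h x.
Proof. by move=> [_ H] x y Hx; rewrite -H /= Hx. Qed.

Lemma not_imV_square (X X' Y Z : gr) (f : morph X Y) (g : morph Y Z)
    (k : morph X X') (h : morph X' Z) :
  meq (mcomp h k) (mcomp g f) -> totalm k ->
  forall y z, mV g y = Some z -> ~~ imV h z -> ~~ imV f y.
Proof.
move=> [H _] kt y z Hy /imVP hz; apply/imVP => -[x Hx]; apply: hz.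
have [x' Hx'] := total_someV kt x; exists x'.
by move: (H x) => /=; rewrite Hx Hx' /= Hy.
Qed.

Lemma not_imE_square (X X' Y Z : gr) (f : morph X Y) (g : morph Y Z)
    (k : morph X X') (h : morph X' Z) :
  meq (mcomp h k) (mcomp g f) -> totalm k ->
  forall y z, mE g y = Some z -> ~~ imE h z -> ~~ imE f y.
Proof.
move=> [_ H] kt y z Hy /imEP hz; apply/imEP => -[x Hx]; apply: hz.
have [x' Hx'] := total_someE kt x; exists x'.
by move: (H x) => /=; rewrite Hx Hx' /= Hy.
Qed.

End Morphisms.

#[export] Instance meq_equiv (Lab : finType) (ar : Lab -> nat) (X Y : graph ar) :
  Equivalence (@meq _ _ X Y).
Proof. by split; [exact: meq_refl | exact: meq_sym | exact: meq_trans]. Qed.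

#[export] Instance mcomp_proper (Lab : finType) (ar : Lab -> nat) (X Y Z : graph ar) :
  Proper (@meq _ _ Y Z ==> @meq _ _ X Y ==> @meq _ _ X Z) (@mcomp _ _ X Y Z).
Proof. by move=> g g' Hg f f' Hf; apply: mcomp_congr. Qed.

Section CanonicalPushout.
Variables (Lab : finType) (ar : Lab -> nat).
Local Notation gr := (graph ar).
Variables (A B C : gr) (a : morph A B) (c : morph A C).
Hypotheses (ct : totalm c) (ci : injm c).

(* Nodes of the pushout are the nodes of B together with the nodes of C
   outside the image of c; a node [c x] is glued to [a x], and dropped
   when [a x] is undefined. *)
Definition fresh_node := {y : gV C | ~~ imV c y}.

Definition po_node (y : gV C) : option (gV B + fresh_node)%type :=
  if [pick x | mV c x == Some y] is Some x then omap inl (mV a x)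
  else omap inr (insub y).

Lemma po_node_old x y : mV c x = Some y -> po_node y = omap inl (mV a x).
Proof.
move=> Hx; rewrite /po_node; case: pickP => [x' /eqP Hx'|/(_ x)].
  by rewrite (ci.1 _ _ _ Hx' Hx).
by rewrite Hx eqxx.
Qed.

Lemma po_node_fresh y (Hy : ~~ imV c y) : po_node y = Some (inr (exist _ y Hy)).
Proof.
rewrite /po_node; case: pickP => [x /eqP Hx|_].
  by case/imVP: Hy; exists x.
by rewrite (insubT (fun y => ~~ imV c y) Hy).
Qed.

Lemma po_node_comp x : obind po_node (mV c x) = omap inl (mV a x).
Proof. by have [y Hy] := total_someV ct x; rewrite Hy /= (po_node_old Hy). Qed.

Definition fresh_edge :=
  {e : gE C | ~~ imE c e && all (fun y => isSome (po_node y)) (conn e)}.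

Definition po_conn (e : (gE B + fresh_edge)%type) : seq (gV B + fresh_node)%type :=
  match e with inl e => map inl (conn e) | inr e => pmap po_node (conn (val e)) end.

Definition po_lab (e : (gE B + fresh_edge)%type) : Lab :=
  match e with inl e => lab e | inr e => lab (val e) end.

Lemma map_Some_pmap (T U : Type) (f : T -> option U) s :
  all (fun x => isSome (f x)) s -> map Some (pmap f s) = map f s.
Proof. by move=> Hs; rewrite pmapS_filter (all_filterP Hs). Qed.

Lemma po_conn_ar e : size (po_conn e) = ar (po_lab e).
Proof.
case: e => [e|[e /= /andP[_ He]]] /=; first by rewrite size_map conn_ar.
by rewrite -conn_ar -(size_map Some) map_Some_pmap // size_map.
Qed.

Definition po_graph : gr :=
  @Graph _ ar (gV B + fresh_node)%type (gE B + fresh_edge)%type po_conn po_lab po_conn_ar.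

Lemma po_inl_morph :
  is_morph (G := B) (H := po_graph) (fun v => Some (inl v)) (fun e => Some (inl e)).
Proof. by move=> e e' [<-] /=; rewrite -map_comp. Qed.

Definition po_inl : morph B po_graph := Morph po_inl_morph.

Definition po_edge (e : gE C) : option (gE B + fresh_edge)%type :=
  if [pick x | mE c x == Some e] is Some x then omap inl (mE a x)
  else omap inr (insub e).

Lemma po_edge_old x e : mE c x = Some e -> po_edge e = omap inl (mE a x).
Proof.
move=> Hx; rewrite /po_edge; case: pickP => [x' /eqP Hx'|/(_ x)].
  by rewrite (ci.2 _ _ _ Hx' Hx).
by rewrite Hx eqxx.
Qed.

Lemma po_edge_fresh e (He : ~~ imE c e && all (fun y => isSome (po_node y)) (conn e)) :
  po_edge e = Some (inr (exist _ e He)).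
Proof.
rewrite /po_edge; case: pickP => [x /eqP Hx|_].
  by have /andP[/imEP[]] := He; exists x.
by rewrite (insubT (fun e => ~~ imE c e && _) He).
Qed.

Lemma po_edge_dangling e :
  ~~ imE c e -> ~~ all (fun y => isSome (po_node y)) (conn e) -> po_edge e = None.
Proof.
move=> He Hd; rewrite /po_edge; case: pickP => [x /eqP Hx|_].
  by case/imEP: He; exists x.
by rewrite insubF // (negbTE Hd) andbF.
Qed.

Lemma po_inr_morph : is_morph (G := C) (H := po_graph) po_node po_edge.
Proof.
move=> e e'; case/boolP: (imE c e) => [/imEP[x Hx]|He].
  rewrite (po_edge_old Hx); case Hax: (mE a x) => [e''|] //= [<-] /=.
  have [l1 c1] := mP Hx; have [l2 c2] := mP Hax; split; first by rewrite l2.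
  transitivity (map (obind po_node) (map Some (conn e))); first by rewrite -map_comp.
  by rewrite -c1 -map_comp (eq_map po_node_comp) map_comp c2 -!map_comp.
case/boolP: (all (fun y => isSome (po_node y)) (conn e)) => Hd.
  have He' : ~~ imE c e && all (fun y => isSome (po_node y)) (conn e) by rewrite He.
  by rewrite (po_edge_fresh He') => -[<-]; split=> //=; rewrite map_Some_pmap.
by rewrite po_edge_dangling.
Qed.

Definition po_inr : morph C po_graph := Morph po_inr_morph.

Lemma po_comm : meq (mcomp po_inl a) (mcomp po_inr c).
Proof.
split=> x /=; first by rewrite po_node_comp; case: (mV a x).
by have [e Hx] := total_someE ct x; rewrite Hx /= (po_edge_old Hx); case: (mE a x).
Qed.

Section Mediating.
Variables (D : gr) (b : morph B D) (d : morph C D).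
Hypothesis Hbd : meq (mcomp b a) (mcomp d c).

Definition po_medV (v : gV po_graph) : option (gV D) :=
  match v with inl v => mV b v | inr y => mV d (val y) end.
Definition po_medE (e : gE po_graph) : option (gE D) :=
  match e with inl e => mE b e | inr e => mE d (val e) end.

Lemma po_medV_node y : obind po_medV (po_node y) = mV d y.
Proof.
case/boolP: (imV c y) => [/imVP[x Hx]|Hy]; last by rewrite (po_node_fresh Hy).
by rewrite (po_node_old Hx) (meq_someV Hbd Hx); case: (mV a x).
Qed.

Lemma po_med_morph : is_morph po_medV po_medE.
Proof.
case=> [e|[e /= /andP[_ He]]] e' /= /mP[l c1]; split=> //.
  by rewrite -map_comp.
rewrite -c1 -(eq_map po_medV_node) (map_comp (obind po_medV) po_node).
by rewrite -(map_Some_pmap He) -map_comp.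
Qed.

Definition po_med : morph po_graph D := Morph po_med_morph.

Lemma po_med_inl : meq (mcomp po_med po_inl) b.
Proof. by []. Qed.

Lemma po_med_inr : meq (mcomp po_med po_inr) d.
Proof.
split=> y /=; first exact: po_medV_node.
case/boolP: (imE c y) => [/imEP[x Hx]|He].
  by rewrite (po_edge_old Hx) (meq_someE Hbd Hx); case: (mE a x).
case/boolP: (all (fun y => isSome (po_node y)) (conn y)) => Hd.
  have He' : ~~ imE c y && all (fun y => isSome (po_node y)) (conn y) by rewrite He.
  by rewrite (po_edge_fresh He').
rewrite po_edge_dangling //=; case Hy: (mE d y) => [e'|//].
case/allPn: Hd => v Hv; rewrite -[po_node v]/(po_node v).
have := morph_conn_def Hy Hv; rewrite -po_medV_node.
by case: (po_node v).
Qed.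

Lemma po_med_uniq (f : morph po_graph D) :
  meq (mcomp f po_inl) b -> meq (mcomp f po_inr) d -> meq f po_med.
Proof.
move=> [fbV fbE] [fdV fdE]; split.
  by case=> [v|[y Hy]]; [apply: fbV | rewrite /= -fdV /= po_node_fresh].
by case=> [e|[e He]]; [apply: fbE | rewrite /= -fdE /= po_edge_fresh].
Qed.

End Mediating.

Lemma po_graph_pushout : is_pushout a c po_inl po_inr.
Proof.
split; first exact: po_comm.
move=> D b d Hbd; exists (po_med Hbd); split.
- exact: po_med_inl.
- exact: po_med_inr.
- by move=> f; apply: po_med_uniq.
Qed.

Lemma pushout_exists :
  exists (D : gr) (b : morph B D) (d : morph C D), is_pushout a c b d.
Proof. by exists po_graph, po_inl, po_inr; apply: po_graph_pushout. Qed.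

End CanonicalPushout.

Section Isomorphisms.
Variables (Lab : finType) (ar : Lab -> nat).
Local Notation gr := (graph ar).

Lemma linv_total_inj (X Y : gr) (u : morph X Y) (v : morph Y X) :
  meq (mcomp v u) (idm X) -> totalm u /\ injm u.
Proof.
move=> [HV HE]; split; [split=> x | split=> x y z Hx Hy].
- by move: (HV x) => /=; case: (mV u x).
- by move: (HE x) => /=; case: (mE u x).
- by move: (HV x) (HV y) => /=; rewrite Hx Hy => -> [].
- by move: (HE x) (HE y) => /=; rewrite Hx Hy => -> [].
Qed.

Lemma rinv_surj (X Y : gr) (u : morph X Y) (v : morph Y X) :
  meq (mcomp u v) (idm Y) -> surjm u.
Proof.
move=> [HV HE]; split=> y.
  by move: (HV y) => /=; case: (mV v y) => //= x; exists x.
by move: (HE y) => /=; case: (mE v y) => //= x; exists x.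
Qed.

Section Inverse.
Variables (X Y : gr) (u : morph X Y).
Hypotheses (ut : totalm u) (ui : injm u) (us : surjm u).

Definition minvV (y : gV Y) : option (gV X) := [pick x | mV u x == Some y].
Definition minvE (e : gE Y) : option (gE X) := [pick x | mE u x == Some e].

Lemma minvV_some x y : mV u x = Some y -> minvV y = Some x.
Proof.
move=> Hx; rewrite /minvV; case: pickP => [x' /eqP Hx'|/(_ x)].
  by rewrite (ui.1 _ _ _ Hx' Hx).
by rewrite Hx eqxx.
Qed.

Lemma minvE_some x e : mE u x = Some e -> minvE e = Some x.
Proof.
move=> Hx; rewrite /minvE; case: pickP => [x' /eqP Hx'|/(_ x)].
  by rewrite (ui.2 _ _ _ Hx' Hx).
by rewrite Hx eqxx.
Qed.

Lemma minv_morph : is_morph minvV minvE.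
Proof.
move=> e x; rewrite /minvE; case: pickP => [x' /eqP /mP[l c1]|//] [<-].
split=> //; transitivity (map (obind minvV) (map Some (conn e))).
  by rewrite -map_comp.
rewrite -c1 -map_comp; apply: eq_map => v /=.
by have [y Hy] := total_someV ut v; rewrite Hy /= (minvV_some Hy).
Qed.

Definition minv : morph Y X := Morph minv_morph.

Lemma minvK : meq (mcomp minv u) (idm X).
Proof.
split=> x /=.
  by have [y Hy] := total_someV ut x; rewrite Hy /= (minvV_some Hy).
by have [e He] := total_someE ut x; rewrite He /= (minvE_some He).
Qed.

Lemma minvKV : meq (mcomp u minv) (idm Y).
Proof.
split=> y /=.
  by have [x Hx] := us.1 y; rewrite (minvV_some Hx) /= Hx.
by have [x Hx] := us.2 y; rewrite (minvE_some Hx) /= Hx.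
Qed.

End Inverse.
End Isomorphisms.

Section PushoutUniversality.
Variables (Lab : finType) (ar : Lab -> nat).
Local Notation gr := (graph ar).
Variables (A B C D : gr) (a : morph A B) (c : morph A C) (b : morph B D) (d : morph C D).
Hypothesis Hpo : is_pushout a c b d.

Lemma pushout_med (E : gr) (b' : morph B E) (d' : morph C E) :
  meq (mcomp b' a) (mcomp d' c) ->
  exists f : morph D E, meq (mcomp f b) b' /\ meq (mcomp f d) d'.
Proof. by move=> /Hpo.2[f [Hb Hd _]]; exists f. Qed.

Lemma pushout_uniq (E : gr) (f g : morph D E) :
  meq (mcomp f b) (mcomp g b) -> meq (mcomp f d) (mcomp g d) -> meq f g.
Proof.
move=> Hb Hd.
have Hsq : meq (mcomp (mcomp f b) a) (mcomp (mcomp f d) c).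
  by rewrite -!mcompA Hpo.1.
have [h [_ _ Hh]] := Hpo.2 _ _ _ Hsq.
by rewrite (Hh f) // (Hh g) // -?Hb -?Hd.
Qed.

Lemma pushout_transfer (D' : gr) (u : morph D D') (v : morph D' D) :
  meq (mcomp v u) (idm D) -> meq (mcomp u v) (idm D') ->
  is_pushout a c (mcomp u b) (mcomp u d).
Proof.
move=> Hvu Huv; split; first by rewrite -!mcompA Hpo.1.
move=> E b' d' Hsq; have [w [Hwb Hwd]] := pushout_med Hsq.
have wvu : forall X (g : morph X D), meq (mcomp (mcomp w v) (mcomp u g)) (mcomp w g).
  by move=> X g; rewrite mcompA -(mcompA u v w) Hvu mcomp_idr.
exists (mcomp w v); split; rewrite ?wvu //.
move=> f Hfb Hfd; rewrite -[f]mcomp_idr -Huv mcompA.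
apply: mcomp_congr => //; apply: pushout_uniq; rewrite -mcompA ?Hfb ?Hfd.
  by rewrite Hwb.
by rewrite Hwd.
Qed.

End PushoutUniversality.

Lemma is_pushout_meq (Lab : finType) (ar : Lab -> nat) (A B C D : graph ar)
    (a : morph A B) (c : morph A C) (b b' : morph B D) (d d' : morph C D) :
  is_pushout a c b d -> meq b b' -> meq d d' -> is_pushout a c b' d'.
Proof.
move=> [Hsq Hu] Hb Hd; split; first by rewrite -Hb -Hd.
move=> E b1 d1 /Hu[f [Hfb Hfd Hf]]; exists f.
split; [by rewrite -Hb | by rewrite -Hd |].
by move=> g Hgb Hgd; apply: Hf; [rewrite Hb | rewrite Hd].
Qed.

Section PushoutAlongEmbedding.
Variables (Lab : finType) (ar : Lab -> nat).
Local Notation gr := (graph ar).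
Variables (A B C D : gr) (a : morph A B) (c : morph A C) (b : morph B D) (d : morph C D).
Hypotheses (ct : totalm c) (ci : injm c) (Hpo : is_pushout a c b d).

Lemma pushout_iso_po_graph :
  exists u : morph (po_graph a c) D,
    [/\ meq (mcomp u (po_inl a c)) b, meq (mcomp u (po_inr a ct ci)) d,
        totalm u, injm u & surjm u].
Proof.
have P := po_graph_pushout a ct ci.
have [u [ub ud]] := pushout_med P Hpo.1.
have [v [vb vd]] := pushout_med Hpo P.1.
have vu : meq (mcomp v u) (idm _).
  by apply: (pushout_uniq P); rewrite -mcompA ?ub ?ud mcomp_idl.
have uv : meq (mcomp u v) (idm _).
  by apply: (pushout_uniq Hpo); rewrite -mcompA ?vb ?vd mcomp_idl.
have [uT uI] := linv_total_inj vu.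
by exists u; split=> //; apply: rinv_surj uv.
Qed.

Lemma pushout_total : totalm b.
Proof.
have [u [[ubV ubE] _ [uV uE] _ _]] := pushout_iso_po_graph.
by split=> z; rewrite -?ubV -?ubE; [apply: uV | apply: uE].
Qed.

Lemma pushout_inj : injm b.
Proof.
have [u [[ubV ubE] _ _ [uV uE] _]] := pushout_iso_po_graph.
split=> x y z; rewrite -?ubV -?ubE => Hx Hy.
  by case: (uV _ _ _ Hx Hy).
by case: (uE _ _ _ Hx Hy).
Qed.

Lemma pushout_old_defV x y : mV c x = Some y -> (mV d y <> None <-> mV a x <> None).
Proof.
move=> Hx; rewrite (meq_someV Hpo.1 Hx).
by case: (mV a x) => //= z; split=> // _; apply: pushout_total.1.
Qed.

Lemma pushout_old_defE x e : mE c x = Some e -> (mE d e <> None <-> mE a x <> None).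
Proof.
move=> Hx; rewrite (meq_someE Hpo.1 Hx).
by case: (mE a x) => //= z; split=> // _; apply: pushout_total.2.
Qed.

Lemma pushout_fresh_defV y : ~~ imV c y -> mV d y <> None.
Proof.
have [u [_ [udV _] [uV _] _ _]] := pushout_iso_po_graph.
by move=> Hy; rewrite -udV /= (po_node_fresh a Hy); apply: uV.
Qed.

Lemma pushout_fresh_defE e :
  ~~ imE c e -> (forall v, v \in conn e -> mV d v <> None) -> mE d e <> None.
Proof.
have [u [_ [udV udE] [_ uE] _ _]] := pushout_iso_po_graph.
move=> He Hd.
have Hall : all (fun y => isSome (po_node a c y)) (conn e).
  by apply/allP => v /Hd; rewrite -udV /=; case: (po_node a c v).
have He' : ~~ imE c e && all (fun y => isSome (po_node a c y)) (conn e).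
  by rewrite He.
by rewrite -udE /= (po_edge_fresh He'); apply: uE.
Qed.

Lemma pushout_fresh_injV y1 y2 w :
  ~~ imV c y1 -> ~~ imV c y2 -> mV d y1 = Some w -> mV d y2 = Some w -> y1 = y2.
Proof.
have [u [_ [udV _] _ [uV _] _]] := pushout_iso_po_graph.
move=> H1 H2; rewrite -!udV /= (po_node_fresh a H1) (po_node_fresh a H2) /=.
by move=> E1 E2; case: (uV _ _ _ E1 E2).
Qed.

Lemma pushout_fresh_injE e1 e2 w :
  ~~ imE c e1 -> ~~ imE c e2 -> mE d e1 = Some w -> mE d e2 = Some w -> e1 = e2.
Proof.
have [u [_ [_ udE] _ [_ uE] _]] := pushout_iso_po_graph.
move=> H1 H2; rewrite -!udE /=.
case/boolP: (all (fun y => isSome (po_node a c y)) (conn e1)) => [A1|A1];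
  last by rewrite po_edge_dangling.
case/boolP: (all (fun y => isSome (po_node a c y)) (conn e2)) => [A2|A2];
  last by rewrite [po_edge _ _ e2]po_edge_dangling.
have K1 : ~~ imE c e1 && all (fun y => isSome (po_node a c y)) (conn e1) by rewrite H1.
have K2 : ~~ imE c e2 && all (fun y => isSome (po_node a c y)) (conn e2) by rewrite H2.
rewrite (po_edge_fresh K1) (po_edge_fresh K2) /= => E1 E2.
by case: (uE _ _ _ E1 E2).
Qed.

Lemma pushout_fresh_disjV y z w : ~~ imV c y -> mV d y = Some w -> mV b z <> Some w.
Proof.
have [u [[ubV _] [udV _] _ [uV _] _]] := pushout_iso_po_graph.
move=> Hy; rewrite -udV -ubV /= (po_node_fresh a Hy) /= => E1 E2.
by have := uV _ _ _ E1 E2.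
Qed.

Lemma pushout_fresh_disjE e z w : ~~ imE c e -> mE d e = Some w -> mE b z <> Some w.
Proof.
have [u [[_ ubE] [_ udE] _ [_ uE] _]] := pushout_iso_po_graph.
move=> He; rewrite -udE -ubE /=.
case/boolP: (all (fun y => isSome (po_node a c y)) (conn e)) => [Ae|Ae];
  last by rewrite po_edge_dangling.
have K : ~~ imE c e && all (fun y => isSome (po_node a c y)) (conn e) by rewrite He.
rewrite (po_edge_fresh K) /= => E1 E2.
by have := uE _ _ _ E1 E2.
Qed.

Lemma pushout_coverV w :
  (exists z, mV b z = Some w) \/ (exists2 y, ~~ imV c y & mV d y = Some w).
Proof.
have [u [[ubV _] [udV _] _ _ [uS _]]] := pushout_iso_po_graph.
have [[z|[y Hy]] Hw] := uS w; first by left; exists z; rewrite -ubV.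
by right; exists y; rewrite // -udV /= (po_node_fresh a Hy).
Qed.

Lemma pushout_coverE w :
  (exists z, mE b z = Some w) \/ (exists2 e, ~~ imE c e & mE d e = Some w).
Proof.
have [u [[_ ubE] [_ udE] _ _ [_ uS]]] := pushout_iso_po_graph.
have [[z|[e He]] Hw] := uS w; first by left; exists z; rewrite -ubE.
right; exists e; first by case/andP: (He).
by rewrite -udE /= (po_edge_fresh He).
Qed.

End PushoutAlongEmbedding.

Section MediatingEmbedding.
Variables (Lab : finType) (ar : Lab -> nat).
Local Notation gr := (graph ar).
Variables (A B C D : gr) (a : morph A B) (c : morph A C) (b : morph B D) (d : morph C D).
Hypotheses (ct : totalm c) (ci : injm c) (Hpo : is_pushout a c b d).
Variables (E : gr) (f : morph D E) (b' : morph B E) (d' : morph C E).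
Hypotheses (Hfb : meq (mcomp f b) b') (Hfd : meq (mcomp f d) d').

Lemma pushout_med_total :
  totalm b' -> (forall y, ~~ imV c y -> mV d' y <> None) ->
  (forall e, ~~ imE c e -> mE d e <> None -> mE d' e <> None) -> totalm f.
Proof.
move=> b't dV dE; split=> x.
  case: (pushout_coverV ct ci Hpo x) => [[z Hz]|[y Hy Hx]].
    by rewrite (meq_comp_someV Hfb Hz); apply: b't.1.
  by rewrite (meq_comp_someV Hfd Hx); apply: dV.
case: (pushout_coverE ct ci Hpo x) => [[z Hz]|[y Hy Hx]].
  by rewrite (meq_comp_someE Hfb Hz); apply: b't.2.
by rewrite (meq_comp_someE Hfd Hx); apply: dE; rewrite ?Hx.
Qed.

Lemma pushout_med_inj :
  injm b' ->
  (forall y1 y2 w, ~~ imV c y1 -> ~~ imV c y2 ->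
     mV d' y1 = Some w -> mV d' y2 = Some w -> y1 = y2) ->
  (forall e1 e2 w, ~~ imE c e1 -> ~~ imE c e2 ->
     mE d' e1 = Some w -> mE d' e2 = Some w -> e1 = e2) ->
  (forall y z w, ~~ imV c y -> mV d' y = Some w -> mV b' z <> Some w) ->
  (forall e z w, ~~ imE c e -> mE d' e = Some w -> mE b' z <> Some w) ->
  injm f.
Proof.
move=> [b'iV b'iE] injV injE disjV disjE; split=> x1 x2 w.
  case: (pushout_coverV ct ci Hpo x1) => [[z1 H1]|[y1 F1 H1]];
  case: (pushout_coverV ct ci Hpo x2) => [[z2 H2]|[y2 F2 H2]];
  rewrite ?(meq_comp_someV Hfb H1) ?(meq_comp_someV Hfd H1);
  rewrite ?(meq_comp_someV Hfb H2) ?(meq_comp_someV Hfd H2) => E1 E2.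
  - by move: H1; rewrite (b'iV _ _ _ E1 E2) H2 => -[].
  - by case: (disjV _ _ _ F2 E2 E1).
  - by case: (disjV _ _ _ F1 E1 E2).
  - by move: H1; rewrite (injV _ _ _ F1 F2 E1 E2) H2 => -[].
case: (pushout_coverE ct ci Hpo x1) => [[z1 H1]|[y1 F1 H1]];
case: (pushout_coverE ct ci Hpo x2) => [[z2 H2]|[y2 F2 H2]];
rewrite ?(meq_comp_someE Hfb H1) ?(meq_comp_someE Hfd H1);
rewrite ?(meq_comp_someE Hfb H2) ?(meq_comp_someE Hfd H2) => E1 E2.
- by move: H1; rewrite (b'iE _ _ _ E1 E2) H2 => -[].
- by case: (disjE _ _ _ F2 E2 E1).
- by case: (disjE _ _ _ F1 E1 E2).
- by move: H1; rewrite (injE _ _ _ F1 F2 E1 E2) H2 => -[].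
Qed.

End MediatingEmbedding.

Section PushoutCriterion.
Variables (Lab : finType) (ar : Lab -> nat).
Local Notation gr := (graph ar).
Variables (A B C D : gr) (a : morph A B) (c : morph A C) (b : morph B D) (d : morph C D).
Hypotheses (ct : totalm c) (ci : injm c).
Hypotheses (Hsq : meq (mcomp b a) (mcomp d c)) (bt : totalm b) (bi : injm b).
Hypotheses (dV : forall y, ~~ imV c y -> mV d y <> None)
  (dE : forall e, ~~ imE c e -> (forall v, v \in conn e -> mV d v <> None) -> mE d e <> None).
Hypotheses (injV : forall y1 y2 w, ~~ imV c y1 -> ~~ imV c y2 ->
              mV d y1 = Some w -> mV d y2 = Some w -> y1 = y2)
  (injE : forall e1 e2 w, ~~ imE c e1 -> ~~ imE c e2 ->
              mE d e1 = Some w -> mE d e2 = Some w -> e1 = e2).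
Hypotheses (disjV : forall y z w, ~~ imV c y -> mV d y = Some w -> mV b z <> Some w)
  (disjE : forall e z w, ~~ imE c e -> mE d e = Some w -> mE b z <> Some w).
Hypotheses (coverV : forall w, (exists z, mV b z = Some w) \/
                                (exists2 y, ~~ imV c y & mV d y = Some w))
  (coverE : forall w, (exists z, mE b z = Some w) \/
                       (exists2 e, ~~ imE c e & mE d e = Some w)).

Lemma pushout_intro : is_pushout a c b d.
Proof.
have P := po_graph_pushout a ct ci.
have [u [ub ud]] := pushout_med P Hsq.
have domV y : mV (po_inr a ct ci) y <> None <-> mV d y <> None.
  case/boolP: (imV c y) => [/imVP[x Hx]|Hy].
    rewrite (pushout_old_defV ct ci P Hx) (meq_someV Hsq Hx).
    by case: (mV a x) => //= z; split=> // _; apply: bt.1.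
  by split=> _; [apply: dV | apply: (pushout_fresh_defV ct ci P)].
have ut : totalm u.
  apply: (pushout_med_total ct ci P ub ud bt dV) => e He /neq_None_Some[e' Ee].
  by apply: (dE He) => v /(morph_conn_def Ee)/domV.
have ui : injm u := pushout_med_inj ct ci P ub ud bi injV injE disjV disjE.
have us : surjm u.
  split=> w.
    case: (coverV w) => [[z Hz]|[y Hy Hw]]; first by exists (inl z); rewrite -Hz -(ub.1 z).
    have [x Hx] := neq_None_Some (pushout_fresh_defV ct ci P Hy).
    by exists x; rewrite (meq_comp_someV ud Hx).
  case: (coverE w) => [[z Hz]|[e He Hw]]; first by exists (inl z); rewrite -Hz -(ub.2 z).
  have /neq_None_Some[x Hx] : mE (po_inr a ct ci) e <> None.
    by apply: (pushout_fresh_defE ct ci P He) => v /(morph_conn_def Hw)/domV.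
  by exists x; rewrite (meq_comp_someE ud Hx).
have := pushout_transfer P (minvK ut ui) (minvKV ut ui us).
by move/is_pushout_meq; apply.
Qed.

End PushoutCriterion.

Section PushoutsAlongSameEmbedding.
Variables (Lab : finType) (ar : Lab -> nat).
Local Notation gr := (graph ar).
Variables (A B B' C D D' : gr) (c : morph A C) (a : morph A B) (a' : morph A B').
Variables (b : morph B D) (d : morph C D) (b' : morph B' D') (d' : morph C D').
Variable e : morph B' B.
Hypotheses (ct : totalm c) (ci : injm c).
Hypotheses (Hpo : is_pushout a c b d) (Hpo' : is_pushout a' c b' d').
Hypotheses (et : totalm e) (Hea : meq (mcomp e a') a).

Lemma pushout_dom_alongV y : mV d' y <> None <-> mV d y <> None.
Proof.
case/boolP: (imV c y) => [/imVP[x Hx]|Hy].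
  rewrite (pushout_old_defV ct ci Hpo' Hx) (pushout_old_defV ct ci Hpo Hx) -(Hea.1 x) /=.
  by case: (mV a' x) => //= z; split=> // _; apply: et.1.
by split=> _; [exact: (pushout_fresh_defV ct ci Hpo Hy) | exact: (pushout_fresh_defV ct ci Hpo' Hy)].
Qed.

Lemma pushout_dom_alongE y : mE d' y <> None <-> mE d y <> None.
Proof.
case/boolP: (imE c y) => [/imEP[x Hx]|Hy].
  rewrite (pushout_old_defE ct ci Hpo' Hx) (pushout_old_defE ct ci Hpo Hx) -(Hea.2 x) /=.
  by case: (mE a' x) => //= z; split=> // _; apply: et.2.
split=> /neq_None_Some[w Hw].
  by apply: (pushout_fresh_defE ct ci Hpo Hy) => v /(morph_conn_def Hw)/pushout_dom_alongV.
by apply: (pushout_fresh_defE ct ci Hpo' Hy) => v /(morph_conn_def Hw)/pushout_dom_alongV.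
Qed.

Lemma pushout_med_along (f : morph D' D) :
  injm e -> meq (mcomp f b') (mcomp b e) -> meq (mcomp f d') d -> totalm f /\ injm f.
Proof.
move=> ei Hfb Hfd; have bt := pushout_total ct ci Hpo; have bi := pushout_inj ct ci Hpo.
split.
  apply: (pushout_med_total ct ci Hpo' Hfb Hfd (mcomp_total et bt)).
    by move=> y Hy; exact: (pushout_fresh_defV ct ci Hpo Hy).
  by move=> y _ /pushout_dom_alongE.
apply: (pushout_med_inj ct ci Hpo' Hfb Hfd (mcomp_inj ei bi)).
- exact: pushout_fresh_injV ct ci Hpo.
- exact: pushout_fresh_injE ct ci Hpo.
- move=> y z w Hy Hw /=; case: (mV e z) => //= z'.
  exact: (pushout_fresh_disjV ct ci Hpo (z := z') Hy Hw).
- move=> y z w Hy Hw /=; case: (mE e z) => //= z'.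
  exact: (pushout_fresh_disjE ct ci Hpo (z := z') Hy Hw).
Qed.

End PushoutsAlongSameEmbedding.

Section Branches.
Variables (Lab : finType) (ar : Lab -> nat).
Local Notation gr := (graph ar).
Variables (L : gr) (u : branch L).

Lemma branch_total : totalm (mcomp (qu u) (pu u)).
Proof.
split=> x; first by have [y [Hy _]] := qu_nodes u x; rewrite /= Hy.
by have [y [Hy _]] := qu_edges u x; rewrite /= Hy.
Qed.

Lemma branch_inj : injm (mcomp (qu u) (pu u)).
Proof.
split=> x1 x2 z /=.
  have [y [-> Hy]] := qu_nodes u x1; move=> [<-].
  have [w Hw] := total_someV (pu_total u) x2; rewrite Hw /= => /Hy Hw1.
  exact: (pu_inj u).1 Hw1 Hw.
have [y [-> Hy]] := qu_edges u x1; move=> [<-].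
have [w Hw] := total_someE (pu_total u) x2; rewrite Hw /= => /Hy Hw1.
exact: (pu_inj u).2 Hw1 Hw.
Qed.

Lemma branch_freshV y z :
  ~~ imV (pu u) y -> mV (qu u) y = Some z -> ~~ imV (mcomp (qu u) (pu u)) z.
Proof.
move=> /imVP Hy Hz; apply/imVP => -[x /=].
have [z' [-> Hu]] := qu_nodes u x => -[Ez]; rewrite {z'}Ez in Hu.
by apply: Hy; exists x; apply: Hu.
Qed.

Lemma branch_freshE y z :
  ~~ imE (pu u) y -> mE (qu u) y = Some z -> ~~ imE (mcomp (qu u) (pu u)) z.
Proof.
move=> /imEP Hy Hz; apply/imEP => -[x /=].
have [z' [-> Hu]] := qu_edges u x => -[Ez]; rewrite {z'}Ez in Hu.
by apply: Hy; exists x; apply: Hu.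
Qed.

End Branches.

Section AttachedEdges.
Variables (Lab : finType) (ar : Lab -> nat).
Local Notation gr := (graph ar).
Variable rho : rule ar.
Hypothesis Hrho : new_edges_attached rho.

(* The fresh part of an outer pushout depends only on the domain of the
   morphism it glues along, which is that of [r] as soon as it factors
   through [r] via a total morphism [rh]. *)
Lemma fresh_edge_attached (u : branch (rL rho)) (Hu : List.In u (rU rho))
    (Lb Rb Rbu : gr) (pi : morph (rL rho) Lb) (ga : morph Lb Rb)
    (rh : morph (rR rho) Rb) (al : morph Rb Rbu) (be : morph (Ru u) Rbu) :
  totalm rh -> meq (mcomp ga pi) (mcomp rh (rr rho)) ->
  is_pushout (mcomp ga pi) (mcomp (qu u) (pu u)) al be ->
  forall e, ~~ imE al e -> exists2 v, v \in conn e & ~~ imV al v.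
Proof.
move=> rht Hrh Hpo e He.
have qt := branch_total u; have qi := branch_inj u.
case: (pushout_coverE qt qi Hpo e) => [[z Hz]|[y Hy Hbe]].
  by case/imEP: He; exists z.
pose r0 := mcomp (rr rho) (idm (rL rho)).
have P0 := po_graph_pushout r0 qt qi.
have Hr0 : meq (mcomp rh r0) (mcomp ga pi) by rewrite /r0 mcomp_idr Hrh.
have /neq_None_Some[e0 Ee0] : mE (po_inr r0 qt qi) y <> None.
  by apply/(pushout_dom_alongE qt qi Hpo P0 rht Hr0); rewrite Hbe.
have [v0 [Hv0 Hnv0]] :=
  Hrho Hu P0 (fun z => pushout_fresh_disjE qt qi P0 (z := z) Hy Ee0).
have [v Hv Hdv] := morph_conn_memV Ee0 Hv0.
have Hvf : ~~ imV (mcomp (qu u) (pu u)) v.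
  apply/imVP => -[x Hx]; move: Hdv; rewrite (meq_someV P0.1 Hx) /=.
  by case: (mV (rr rho) x) => [r|] //= [Er]; apply: (Hnv0 r); rewrite /= Er.
have [w Hw] := neq_None_Some (pushout_fresh_defV qt qi Hpo Hvf).
exists w; first exact: morph_conn_mem Hbe Hv Hw.
by apply/imVP => -[z Hz]; apply: (pushout_fresh_disjV qt qi Hpo Hvf Hw Hz).
Qed.

End AttachedEdges.

Lemma card_le_pinj (X Y : finType) (f : X -> option Y) (S : {set X}) (T : {set Y}) :
  pinj f -> (forall x, x \in S -> exists2 y, f x = Some y & y \in T) -> #|S| <= #|T|.
Proof.
move=> fi fST.
have fS : {in S &, injective f}.
  move=> x1 x2 /fST[y Hy _] _ E; apply: (fi _ _ _ Hy); by rewrite -E.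
rewrite -(card_in_imset fS) -(card_imset T (@Some_inj _)); apply: subset_leq_card.
by apply/subsetP => _ /imsetP[x /fST[y -> Hy] ->]; apply: imset_f.
Qed.

Lemma card_lt_pinj (X Y : finType) (f : X -> option Y) (S : {set X}) (T : {set Y}) t :
  pinj f -> (forall x, x \in S -> exists2 y, f x = Some y & y \in T) ->
  t \in T -> (forall x, f x <> Some t) -> #|S| < #|T|.
Proof.
move=> fi fST Ht Hnt; rewrite (cardsD1 t T) Ht add1n ltnS.
apply: card_le_pinj fi _ => x /fST[y Hy HyT]; exists y => //.
by rewrite in_setD1 HyT andbT; apply/eqP => Eyt; apply: (Hnt x); rewrite -Eyt.
Qed.

Section Visibility.
Variables (Lab : finType) (ar : Lab -> nat).
Local Notation gr := (graph ar).

(* [W] is to become the domain of the subgraph morphism [nu]: an invisible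
   item is one that [nu] is bound to forget. *)
Definition invisibleV (Y : gr) (W : pred (gV Y)) (y : option (gV Y)) : bool :=
  oapp (predC W) true y.

Definition invisibleE (Y : gr) (W : pred (gV Y)) (e : option (gE Y)) : bool :=
  oapp (fun e => has (predC W) (conn e)) true e.

Definition hides_outside (Z X Y : gr) (g : morph Z X) (f : morph X Y)
    (W : pred (gV Y)) : Prop :=
  (forall x, ~~ imV g x -> invisibleV W (mV f x)) /\
  (forall x, ~~ imE g x -> invisibleE W (mE f x)).

Definition preimV (Y Y' : gr) (f : morph Y Y') (W : pred (gV Y')) : pred (gV Y) :=
  fun y => oapp W false (mV f y).

Lemma invisibleV_comp (Y Y' : gr) (f : morph Y Y') W o :
  invisibleV (preimV f W) o -> invisibleV W (obind (mV f) o).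
Proof. by case: o => //= y; rewrite /preimV; case: (mV f y). Qed.

Lemma invisibleE_comp (Y Y' : gr) (f : morph Y Y') W o :
  invisibleE (preimV f W) o -> invisibleE W (obind (mE f) o).
Proof.
case: o => //= e /hasP[v Hv Wv]; case He: (mE f e) => [e'|] //=.
have [w Hw] := neq_None_Some (morph_conn_def He Hv).
apply/hasP; exists w; first exact: morph_conn_mem He Hv Hw.
by move: Wv; rewrite /preimV /= Hw.
Qed.

End Visibility.

Section Shrinking.
Variables (Lab : finType) (ar : Lab -> nat).
Local Notation gr := (graph ar).
Variable rho : rule ar.
Local Notation L := (rL rho).
Local Notation R := (rR rho).

(* A sub-instantiation, embedded by [eL] and [eR], that misses only items
   invisible for [W]; each of its steps contributes a visible node that does
   not come from [R], whence the bound on [k]. *)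
Variant shrinking (Lb Rb : gr) (pi : morph L Lb) (ga : morph Lb Rb)
    (rh : morph R Rb) (W : pred (gV Rb)) : Prop :=
  Shrinking k (Lb' Rb' : gr) (pi' : morph L Lb') (ga' : morph Lb' Rb')
      (eL : morph Lb' Lb) (eR : morph Rb' Rb) of
    inst k pi' ga' & totalm eL & injm eL & totalm eR & injm eR &
    meq (mcomp eL pi') pi & meq (mcomp ga eL) (mcomp eR ga') &
    k <= #|[set w | W w & ~~ imV rh w]| &
    hides_outside eR (idm Rb) W & hides_outside eL ga W.

Definition shrinkable (Lb Rb : gr) (pi : morph L Lb) (ga : morph Lb Rb) : Prop :=
  exists rh : morph R Rb,
    [/\ totalm rh, meq (mcomp ga pi) (mcomp rh (rr rho)) & forall W, shrinking pi ga rh W].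

Lemma shrinkable_base : shrinkable (idm L) (rr rho).
Proof.
exists (idm R); split; [exact: idm_total | by rewrite mcomp_idl |].
move=> W; apply: (Shrinking (k := 0) (inst0 rho)).
- exact: idm_total.
- exact: idm_inj.
- exact: idm_total.
- exact: idm_inj.
- by [].
- by rewrite mcomp_idl.
- by [].
- by split=> x /negP[]; [apply/imVP | apply/imEP]; exists x.
- by split=> x /negP[]; [apply/imVP | apply/imEP]; exists x.
Qed.

Section Step.
Variables (Lb Rb : gr) (pi : morph L Lb) (ga : morph Lb Rb) (rh : morph R Rb).
Hypothesis rht : totalm rh.
Hypothesis Hrh : meq (mcomp ga pi) (mcomp rh (rr rho)).
Variables (u : branch L) (Lbu Rbu : gr) (p' : morph Lb Lbu) (pi' : morph (Lu u) Lbu).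
Variables (al : morph Rb Rbu) (be : morph (Ru u) Rbu) (eta : morph Lbu Rbu).
Hypothesis Hu : List.In u (rU rho).
Hypotheses (Hpo1 : is_pushout pi (pu u) p' pi')
  (Hpo2 : is_pushout (mcomp ga pi) (mcomp (qu u) (pu u)) al be).
Hypotheses (He1 : meq (mcomp eta p') (mcomp al ga))
  (He2 : meq (mcomp eta pi') (mcomp be (qu u))).
Variable W : pred (gV Rbu).
Variables (k : nat) (Lb1 Rb1 : gr) (pi1 : morph L Lb1) (ga1 : morph Lb1 Rb1).
Variables (eL : morph Lb1 Lb) (eR : morph Rb1 Rb).
Hypotheses (I1 : inst k pi1 ga1) (eLt : totalm eL) (eLi : injm eL)
  (eRt : totalm eR) (eRi : injm eR).
Hypotheses (HeL : meq (mcomp eL pi1) pi) (HeR : meq (mcomp ga eL) (mcomp eR ga1)).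
Hypotheses (Hk : k <= #|[set w | preimV al W w & ~~ imV rh w]|)
  (hR : hides_outside eR (idm Rb) (preimV al W)) (hL : hides_outside eL ga (preimV al W)).

Let put := pu_total u.
Let pui := pu_inj u.
Let qpt := branch_total u.
Let qpi := branch_inj u.
Let alt := pushout_total qpt qpi Hpo2.
Let ali := pushout_inj qpt qpi Hpo2.

Lemma preimV_count_maps x :
  x \in [set w | preimV al W w & ~~ imV rh w] ->
  exists2 y, mV al x = Some y & y \in [set w | W w & ~~ imV (mcomp al rh) w].
Proof.
rewrite inE /preimV => /andP[Wx /imVP rhx]; have [y Hy] := total_someV alt x.
exists y => //; rewrite inE; move: Wx; rewrite Hy /= => -> /=.
apply/imVP => -[z /=]; case Hz: (mV rh z) => [x'|] //= Hx'.
by apply: rhx; exists z; rewrite Hz (ali.1 _ _ _ Hx' Hy).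
Qed.

Lemma old_invisibleV_R w0 w :
  mV al w0 = Some w -> ~~ imV eR w0 -> invisibleV W (Some w).
Proof. by move=> Hw /hR.1 /= /(invisibleV_comp (o := Some w0)); rewrite /= Hw. Qed.

Lemma old_invisibleE_R e0 e :
  mE al e0 = Some e -> ~~ imE eR e0 -> invisibleE W (Some e).
Proof. by move=> He /hR.2 /= /(invisibleE_comp (o := Some e0)); rewrite /= He. Qed.

Lemma old_invisibleV_L x0 x :
  mV p' x0 = Some x -> ~~ imV eL x0 -> invisibleV W (mV eta x).
Proof.
by move=> Hx /hL.1 /invisibleV_comp; rewrite (meq_comp_someV He1 Hx).
Qed.

Lemma old_invisibleE_L x0 x :
  mE p' x0 = Some x -> ~~ imE eL x0 -> invisibleE W (mE eta x).
Proof.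
by move=> Hx /hL.2 /invisibleE_comp; rewrite (meq_comp_someE He1 Hx).
Qed.

Section Drop.
Hypothesis Hrho : new_edges_attached rho.
Hypothesis drop : forall w, ~~ imV al w -> ~~ W w.

Lemma drop_invisibleE e : ~~ imE al e -> invisibleE W (Some e).
Proof.
move=> /(fresh_edge_attached Hrho Hu rht Hrh Hpo2)[v Hv /drop Wv].
by apply/hasP; exists v.
Qed.

Lemma drop_hides_R : hides_outside (mcomp al eR) (idm Rbu) W.
Proof.
split=> x Hx /=.
  case/boolP: (imV al x) => [/imVP[w0 Hw0]|/drop //].
  exact: old_invisibleV_R Hw0 (not_imV_square (mcomp_idr _) (idm_total _) Hw0 Hx).
case/boolP: (imE al x) => [/imEP[e0 He0]|/drop_invisibleE //].
exact: old_invisibleE_R He0 (not_imE_square (mcomp_idr _) (idm_total _) He0 Hx).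
Qed.

Lemma drop_hides_L : hides_outside (mcomp p' eL) eta W.
Proof.
split=> x Hx.
  case: (pushout_coverV put pui Hpo1 x) => [[x0 Hx0]|[y Hy Hx0]].
    exact: old_invisibleV_L Hx0 (not_imV_square (mcomp_idr _) (idm_total _) Hx0 Hx).
  rewrite (meq_comp_someV He2 Hx0) /=; case Hz: (mV (qu u) y) => [z|] //=.
  case Hw: (mV be z) => [w|] //=; apply: drop; apply/imVP => -[w0 Hw0].
  exact: (pushout_fresh_disjV qpt qpi Hpo2 (branch_freshV Hy Hz) Hw Hw0).
case: (pushout_coverE put pui Hpo1 x) => [[x0 Hx0]|[y Hy Hx0]].
  exact: old_invisibleE_L Hx0 (not_imE_square (mcomp_idr _) (idm_total _) Hx0 Hx).
rewrite (meq_comp_someE He2 Hx0) /=; case Hz: (mE (qu u) y) => [z|] //=.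
case Hw: (mE be z) => [w|] //=; apply: drop_invisibleE; apply/imEP => -[w0 Hw0].
exact: (pushout_fresh_disjE qpt qpi Hpo2 (branch_freshE Hy Hz) Hw Hw0).
Qed.

Lemma shrinking_drop : shrinking (mcomp p' pi) eta (mcomp al rh) W.
Proof.
have p't := pushout_total put pui Hpo1; have p'i := pushout_inj put pui Hpo1.
apply: (Shrinking I1 (mcomp_total eLt p't) (mcomp_inj eLi p'i)
                    (mcomp_total eRt alt) (mcomp_inj eRi ali)).
- by rewrite -mcompA HeL.
- by rewrite mcompA He1 -mcompA HeR mcompA.
- exact: leq_trans Hk (card_le_pinj ali.1 preimV_count_maps).
- exact: drop_hides_R.
- exact: drop_hides_L.
Qed.

End Drop.

Lemma sub_square : meq (mcomp eR (mcomp ga1 pi1)) (mcomp ga pi).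
Proof. by rewrite mcompA -HeR -mcompA HeL. Qed.

Section Keep.
Variables (Lb2 Rb2 : gr) (p2 : morph Lb1 Lb2) (pi2 : morph (Lu u) Lb2).
Variables (al2 : morph Rb1 Rb2) (be2 : morph (Ru u) Rb2) (eta2 : morph Lb2 Rb2).
Variables (eL2 : morph Lb2 Lbu) (eR2 : morph Rb2 Rbu).
Hypotheses (Hpo3 : is_pushout pi1 (pu u) p2 pi2)
  (Hpo4 : is_pushout (mcomp ga1 pi1) (mcomp (qu u) (pu u)) al2 be2).
Hypotheses (Heta1 : meq (mcomp eta2 p2) (mcomp al2 ga1))
  (Heta2 : meq (mcomp eta2 pi2) (mcomp be2 (qu u))).
Hypotheses (HeL2a : meq (mcomp eL2 p2) (mcomp p' eL)) (HeL2b : meq (mcomp eL2 pi2) pi').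
Hypotheses (HeR2a : meq (mcomp eR2 al2) (mcomp al eR)) (HeR2b : meq (mcomp eR2 be2) be).

Lemma keep_hides_R : hides_outside eR2 (idm Rbu) W.
Proof.
have al2t := pushout_total qpt qpi Hpo4.
split=> x Hx /=.
  case: (pushout_coverV qpt qpi Hpo2 x) => [[w0 Hw0]|[y Hy Hx0]].
    exact: old_invisibleV_R Hw0 (not_imV_square HeR2a al2t Hw0 Hx).
  have [t Ht] := neq_None_Some (pushout_fresh_defV qpt qpi Hpo4 Hy).
  by case/negP: Hx; apply/imVP; exists t; rewrite (meq_comp_someV HeR2b Ht).
case: (pushout_coverE qpt qpi Hpo2 x) => [[e0 He0]|[y Hy Hx0]].
  exact: old_invisibleE_R He0 (not_imE_square HeR2a al2t He0 Hx).
have /neq_None_Some[t Ht] : mE be2 y <> None.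
  by apply/(pushout_dom_alongE qpt qpi Hpo2 Hpo4 eRt sub_square); rewrite Hx0.
by case/negP: Hx; apply/imEP; exists t; rewrite (meq_comp_someE HeR2b Ht).
Qed.

Lemma keep_hides_L : hides_outside eL2 eta W.
Proof.
have p2t := pushout_total put pui Hpo3.
split=> x Hx.
  case: (pushout_coverV put pui Hpo1 x) => [[x0 Hx0]|[y Hy Hx0]].
    exact: old_invisibleV_L Hx0 (not_imV_square HeL2a p2t Hx0 Hx).
  have /neq_None_Some[t Ht] : mV pi2 y <> None.
    by apply/(pushout_dom_alongV put pui Hpo1 Hpo3 eLt HeL); rewrite Hx0.
  by case/negP: Hx; apply/imVP; exists t; rewrite (meq_comp_someV HeL2b Ht).
case: (pushout_coverE put pui Hpo1 x) => [[x0 Hx0]|[y Hy Hx0]].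
  exact: old_invisibleE_L Hx0 (not_imE_square HeL2a p2t Hx0 Hx).
have /neq_None_Some[t Ht] : mE pi2 y <> None.
  by apply/(pushout_dom_alongE put pui Hpo1 Hpo3 eLt HeL); rewrite Hx0.
by case/negP: Hx; apply/imEP; exists t; rewrite (meq_comp_someE HeL2b Ht).
Qed.

Lemma shrinking_extend w :
  ~~ imV al w -> W w -> shrinking (mcomp p' pi) eta (mcomp al rh) W.
Proof.
move=> /imVP alw Ww.
have [eL2t eL2i] := pushout_med_along put pui Hpo1 Hpo3 eLt HeL eLi HeL2a HeL2b.
have [eR2t eR2i] := pushout_med_along qpt qpi Hpo2 Hpo4 eRt sub_square eRi HeR2a HeR2b.
apply: (Shrinking (instS I1 Hu Hpo3 Hpo4 Heta1 Heta2) eL2t eL2i eR2t eR2i).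
- by rewrite mcompA HeL2a -mcompA HeL.
- apply: (pushout_uniq Hpo3); rewrite -!mcompA.
    transitivity (mcomp al (mcomp eR ga1)).
      by rewrite HeL2a mcompA He1 -mcompA HeR.
    by symmetry; rewrite Heta1 mcompA HeR2a -mcompA.
  by rewrite HeL2b He2 Heta2 mcompA HeR2b.
- apply: leq_ltn_trans Hk _; apply: (card_lt_pinj ali.1 preimV_count_maps (t := w)).
    by rewrite inE Ww not_imV_comp //; apply/imVP.
  by move=> x Hx; apply: alw; exists x.
- exact: keep_hides_R.
- exact: keep_hides_L.
Qed.

End Keep.

Lemma shrinking_keep w :
  ~~ imV al w -> W w -> shrinking (mcomp p' pi) eta (mcomp al rh) W.
Proof.
have [Lb2 [p2 [pi2 Hpo3]]] := pushout_exists pi1 put pui.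
have [Rb2 [al2 [be2 Hpo4]]] := pushout_exists (mcomp ga1 pi1) qpt qpi.
have [eta2 [Heta1 Heta2]] :=
  pushout_med Hpo3 (b' := mcomp al2 ga1) (d' := mcomp be2 (qu u))
    ltac:(by rewrite -!mcompA Hpo4.1).
have [eL2 [HeL2a HeL2b]] :=
  pushout_med Hpo3 (b' := mcomp p' eL) (d' := pi') ltac:(by rewrite -mcompA HeL Hpo1.1).
have [eR2 [HeR2a HeR2b]] :=
  pushout_med Hpo4 (b' := mcomp al eR) (d' := be)
    ltac:(by rewrite -mcompA sub_square Hpo2.1).
move=> Hw Ww; exact: (shrinking_extend Hpo3 Hpo4 Heta1 Heta2 HeL2a HeL2b HeR2a HeR2b Hw Ww).
Qed.

Lemma shrinking_step :
  new_edges_attached rho -> shrinking (mcomp p' pi) eta (mcomp al rh) W.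
Proof.
move=> Hrho; case/boolP: [exists w, ~~ imV al w && W w].
  by case/existsP=> w /andP[]; apply: shrinking_keep.
move=> /existsPn drop; apply: shrinking_drop => // w Hw.
by move: (drop w); rewrite Hw.
Qed.

End Step.

Lemma inst_shrinkable : new_edges_attached rho ->
  forall n (Lb Rb : gr) (pi : morph L Lb) (ga : morph Lb Rb),
  inst n pi ga -> shrinkable pi ga.
Proof.
move=> Hrho n Lb Rb pi ga; elim=> [|{}n {}Lb {}Rb {}pi {}ga _ IH u Hu Lbu p' pi' Hpo1
                                    Rbu al be Hpo2 eta He1 He2].
  exact: shrinkable_base.
have [rh [rht Hrh Hsh]] := IH.
have alt := pushout_total (branch_total u) (branch_inj u) Hpo2.
exists (mcomp al rh); split; first exact: mcomp_total.
  by rewrite mcompA He1 -mcompA Hrh mcompA.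
move=> W; case: (Hsh (preimV al W)) => k Lb1 Rb1 pi1 ga1 eL eR I1 eLt eLi eRt eRi.
move=> HeL HeR Hk hR hL.
exact: (shrinking_step rht Hrh Hu Hpo1 Hpo2 He1 He2 I1 eLt eLi eRt eRi HeL HeR Hk hR hL).
Qed.

End Shrinking.

Section Restriction.
Variables (Lab : finType) (ar : Lab -> nat).
Local Notation gr := (graph ar).
Variables (Lb1 Lb H : gr) (eL : morph Lb1 Lb) (c : morph Lb H).

Definition removedV (x : gV H) : bool := [exists z, (mV c z == Some x) && ~~ imV eL z].
Definition removedE (e : gE H) : bool := [exists z, (mE c z == Some e) && ~~ imE eL z].
Definition keptV (x : gV H) : bool := ~~ removedV x.
Definition keptE (e : gE H) : bool := ~~ removedE e && all keptV (conn e).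

Definition rest_conn (e : {e | keptE e}) : seq {x | keptV x} := pmap insub (conn (val e)).

Lemma rest_conn_ar e : size (rest_conn e) = ar (lab (val e)).
Proof.
case: e => e Ke; have /andP[_ He] := Ke; rewrite -conn_ar /rest_conn size_pmap.
by rewrite (eq_count (isSome_insub _)); apply/eqP; rewrite -all_count.
Qed.

Definition rest_graph : gr :=
  @Graph _ ar {x | keptV x} {e | keptE e} rest_conn (fun e => lab (val e)) rest_conn_ar.

Lemma map_val_rest_conn e : map val (rest_conn e) = conn (val e).
Proof.
rewrite /rest_conn (pmap_filter (insubK _)); apply/all_filterP.
by case: e => e /= /andP[_]; rewrite (eq_all (isSome_insub _)).
Qed.

Lemma rest_incl_morph :
  is_morph (G := rest_graph) (H := H) (fun x => Some (val x)) (fun e => Some (val e)).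
Proof. by move=> e _ [<-]; split=> //; rewrite (map_comp Some val) map_val_rest_conn. Qed.

Definition rest_incl : morph rest_graph H := Morph rest_incl_morph.

Lemma rest_proj_morph :
  is_morph (G := H) (H := rest_graph) (fun x => insub x) (fun e => insub e).
Proof.
move=> e e'; case: insubP => // [[e1 Ke1]] _ /= Ee [<-]; subst e1; split=> //=.
by rewrite /rest_conn map_Some_pmap // (eq_all (isSome_insub _)); case/andP: (Ke1).
Qed.

Definition rest_proj : morph H rest_graph := Morph rest_proj_morph.

Lemma rest_proj_subgraph : subgraph_morph rest_proj.
Proof.
split; split.
- by move=> x y z /=; do 2![case: insubP => // ? _ <- [->]].
- by move=> x y z /=; do 2![case: insubP => // ? _ <- [->]].
- by move=> z; exists (val z); rewrite /= valK.
- by move=> z; exists (val z); rewrite /= valK.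
Qed.

End Restriction.

Section RestrictedPushout.
Variables (Lab : finType) (ar : Lab -> nat).
Local Notation gr := (graph ar).
Variables (Lb1 Lb H R' G : gr) (eL : morph Lb1 Lb) (c : morph Lb H).
Variables (f : morph Lb R') (f1 : morph Lb1 R') (m : morph R' G) (d : morph H G).
Hypotheses (ct : totalm c) (ci : injm c) (eLt : totalm eL) (eLi : injm eL).
Hypotheses (mt : totalm m) (mi : injm m) (Hpo : is_pushout f c m d).
Hypothesis Hf1 : meq (mcomp f eL) f1.
Hypothesis fV : forall x, ~~ imV eL x -> mV f x = None.

Definition rest_c : morph Lb1 (rest_graph eL c) := mcomp (rest_proj eL c) (mcomp c eL).
Definition rest_d : morph (rest_graph eL c) G := mcomp d (rest_incl eL c).

Lemma keptV_image z x : mV (mcomp c eL) z = Some x -> keptV eL c x.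
Proof.
rewrite /=; case Ez: (mV eL z) => [z'|] //= Hx.
apply/existsP => -[z'' /andP[/eqP Hz'' /imVP[]]].
by exists z; rewrite Ez (ci.1 _ _ _ Hz'' Hx).
Qed.

Lemma keptE_image z e : mE (mcomp c eL) z = Some e -> keptE eL c e.
Proof.
move=> He; apply/andP; split.
  move: He; rewrite /=; case Ez: (mE eL z) => [z'|] //= Hx.
  apply/existsP => -[z'' /andP[/eqP Hz'' /imEP[]]].
  by exists z; rewrite Ez (ci.2 _ _ _ Hz'' Hx).
apply/allP => v /(morph_conn_memV He)[v1 _ Hv1]; exact: keptV_image Hv1.
Qed.

Lemma rest_incl_c : meq (mcomp (rest_incl eL c) rest_c) (mcomp c eL).
Proof.
split=> z /=.
  case Ez: (mV eL z) => [z'|] //=.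
  by case Hx: (mV c z') => [x|] //=; rewrite insubT // (keptV_image (z := z)) //= Ez.
case Ez: (mE eL z) => [z'|] //=.
by case Hx: (mE c z') => [x|] //=; rewrite insubT // (keptE_image (z := z)) //= Ez.
Qed.

Lemma rest_c_total : totalm rest_c.
Proof.
split=> z.
  have [x Hx] := total_someV (mcomp_total eLt ct) z.
  by have Kx := keptV_image Hx; move: Hx => /= ->; rewrite /= insubT.
have [x Hx] := total_someE (mcomp_total eLt ct) z.
by have Kx := keptE_image Hx; move: Hx => /= ->; rewrite /= insubT.
Qed.

Lemma rest_c_inj : injm rest_c.
Proof. exact: mcomp_inj (mcomp_inj eLi ci) (rest_proj_subgraph eL c).1. Qed.

Lemma not_im_rest_cV y : ~~ imV rest_c y = ~~ imV c (val y).
Proof.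
congr negb; apply/imVP/imVP => -[z Hz].
  have [z' Hz'] := total_someV eLt z; exists z'.
  by move: (meq_comp_someV rest_incl_c Hz) => /=; rewrite Hz' /= => <-.
case/boolP: (imV eL z) => [/imVP[z1 Hz1]|Hz1].
  by exists z1; rewrite /= Hz1 /= Hz /= valK.
by case/negP: (valP y); apply/existsP; exists z; rewrite Hz eqxx.
Qed.

Lemma not_im_rest_cE y : ~~ imE rest_c y = ~~ imE c (val y).
Proof.
congr negb; apply/imEP/imEP => -[z Hz].
  have [z' Hz'] := total_someE eLt z; exists z'.
  by move: (meq_comp_someE rest_incl_c Hz) => /=; rewrite Hz' /= => <-.
case/boolP: (imE eL z) => [/imEP[z1 Hz1]|Hz1].
  by exists z1; rewrite /= Hz1 /= Hz /= valK.
by case/andP: (valP y) => /negP[]; apply/existsP; exists z; rewrite Hz eqxx.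
Qed.

Lemma rest_coverV w :
  (exists z, mV m z = Some w) \/ (exists2 y, ~~ imV rest_c y & mV rest_d y = Some w).
Proof.
case: (pushout_coverV ct ci Hpo w) => [|[x Hx Hdx]]; first by left.
have Kx : keptV eL c x.
  by apply/existsP => -[z /andP[/eqP Hz _]]; case/negP: Hx; apply/imVP; exists z.
by right; exists (exist _ x Kx); rewrite ?not_im_rest_cV.
Qed.

Lemma rest_coverE w :
  (exists z, mE m z = Some w) \/ (exists2 e, ~~ imE rest_c e & mE rest_d e = Some w).
Proof.
case: (pushout_coverE ct ci Hpo w) => [|[x Hx Hdx]]; first by left.
have Kx : keptE eL c x.
  apply/andP; split.
    by apply/existsP => -[z /andP[/eqP Hz _]]; case/negP: Hx; apply/imEP; exists z.
  apply/allP => v Hv; apply/existsP => -[z /andP[/eqP Hz /fV Hfz]].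
  by apply: (morph_conn_def Hdx Hv); rewrite (meq_someV Hpo.1 Hz) Hfz.
by right; exists (exist _ x Kx); rewrite ?not_im_rest_cE.
Qed.

Lemma rest_pushout : is_pushout f1 rest_c m rest_d.
Proof.
apply: (pushout_intro rest_c_total rest_c_inj _ mt mi _ _ _ _ _ _ rest_coverV rest_coverE).
- by rewrite /rest_d -mcompA rest_incl_c mcompA -Hpo.1 -mcompA Hf1.
- by move=> y; rewrite not_im_rest_cV; exact: (pushout_fresh_defV ct ci Hpo).
- move=> e; rewrite not_im_rest_cE => He Hd.
  apply: (pushout_fresh_defE ct ci Hpo He) => v.
  by rewrite -map_val_rest_conn => /mapP[v' /Hd Hv' ->].
- move=> y1 y2 w; rewrite !not_im_rest_cV => H1 H2 E1 E2.
  exact/val_inj/(pushout_fresh_injV ct ci Hpo H1 H2 E1 E2).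
- move=> e1 e2 w; rewrite !not_im_rest_cE => H1 H2 E1 E2.
  exact/val_inj/(pushout_fresh_injE ct ci Hpo H1 H2 E1 E2).
- by move=> y z w; rewrite not_im_rest_cV; exact: (pushout_fresh_disjV ct ci Hpo).
- by move=> e z w; rewrite not_im_rest_cE; exact: (pushout_fresh_disjE ct ci Hpo).
Qed.

End RestrictedPushout.

Section Domains.
Variables (Lab : finType) (ar : Lab -> nat).
Local Notation gr := (graph ar).

Definition domV (Y Y' : gr) (f : morph Y Y') : pred (gV Y) := fun y => isSome (mV f y).

Lemma card_gV_le (X Y : gr) (f : morph X Y) : totalm f -> injm f -> #|gV X| <= #|gV Y|.
Proof.
move=> ft fi; rewrite -!cardsT; apply: card_le_pinj fi.1 _ => x _.
by have [y Hy] := total_someV ft x; exists y; rewrite ?inE.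
Qed.

Lemma card_domV_le (X Y : gr) (f : morph X Y) : injm f -> #|[set x | domV f x]| <= #|gV Y|.
Proof.
move=> fi; rewrite -cardsT; apply: card_le_pinj fi.1 _ => x.
by rewrite inE /domV; case: (mV f x) => // y _; exists y; rewrite ?inE.
Qed.

Variables (Z X Y Y' : gr) (g : morph Z X) (h : morph X Y) (nu : morph Y Y').
Hypothesis hid : hides_outside g h (domV nu).

Lemma hides_outside_domV x : ~~ imV g x -> mV (mcomp nu h) x = None.
Proof. by move/hid.1; rewrite /=; case: (mV h x) => //= y; rewrite /domV; case: (mV nu y). Qed.

Lemma hides_outside_domE x : ~~ imE g x -> mE (mcomp nu h) x = None.
Proof.
move/hid.2; rewrite /=; case: (mE h x) => //= e /hasP[v Hv].
rewrite /domV /=; case He: (mE nu e) => [e'|] //.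
by have := morph_conn_def He Hv; case: (mV nu v).
Qed.

End Domains.

Lemma subgraph_morph_comp_hides (Lab : finType) (ar : Lab -> nat) (X Y Y' : graph ar)
    (eR : morph X Y) (nu : morph Y Y') :
  subgraph_morph nu -> injm eR -> hides_outside eR (idm Y) (domV nu) ->
  subgraph_morph (mcomp nu eR).
Proof.
move=> [nui [nusV nusE]] eRi hid; split; first exact: mcomp_inj.
split=> z.
  have [w Hw] := nusV z; case/boolP: (imV eR w) => [/imVP[x Hx]|/(hides_outside_domV hid)].
    by exists x; rewrite /= Hx.
  by rewrite /= Hw.
have [w Hw] := nusE z; case/boolP: (imE eR w) => [/imEP[x Hx]|/(hides_outside_domE hid)].
  by exists x; rewrite /= Hx.
by rewrite /= Hw.
Qed.

Theorem lemma4 (Lab : finType) (ar : Lab -> nat) (rho : rule ar)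
  (Hrho : new_edges_attached rho) (G : graph ar) :
  forall (n : nat) (Lb Rb : graph ar) (pi : morph (rL rho) Lb) (ga : morph Lb Rb),
    inst n pi ga -> #|gV G| < n ->
  forall (R' : graph ar) (nu : morph Rb R') (m : morph R' G),
    subgraph_morph nu -> totalm m -> injm m ->
  forall (H : graph ar) (c : morph Lb H) (d : morph H G),
    totalm c -> injm c -> is_pushout (mcomp nu ga) c m d ->
  exists (n' : nat) (Lb' Rb' : graph ar) (pi' : morph (rL rho) Lb')
         (ga' : morph Lb' Rb'),
    [/\ inst n' pi' ga', n' <= #|gV G| &
    exists nu' : morph Rb' R', subgraph_morph nu' /\
    exists (H' : graph ar) (c' : morph Lb' H') (d' : morph H' G),
      [/\ totalm c', injm c', is_pushout (mcomp nu' ga') c' m d' & subgraph H' H]].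
Proof.
move=> n Lb Rb pi ga I _ R' nu m nus mt mi H c d ct ci Hpo.
have [rh [_ _ Hsh]] := inst_shrinkable Hrho I.
case: (Hsh (domV nu)) => k Lb1 Rb1 pi1 ga1 eL eR I1 eLt eLi eRt eRi _ HeR Hk hR hL.
exists k, Lb1, Rb1, pi1, ga1; split=> //.
  apply: leq_trans Hk (leq_trans _ (card_gV_le mt mi)).
  apply: leq_trans (card_domV_le nus.1).
  by apply/subset_leq_card/subsetP => w; rewrite !inE => /andP[].
exists (mcomp nu eR); split; first exact: subgraph_morph_comp_hides nus eRi hR.
have Hf1 : meq (mcomp (mcomp nu ga) eL) (mcomp (mcomp nu eR) ga1).
  by rewrite -mcompA HeR mcompA.
exists (rest_graph eL c), (rest_c eL c), (rest_d eL c d); split.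
- exact: rest_c_total.
- exact: rest_c_inj.
- exact: rest_pushout ct ci eLt eLi mt mi Hpo Hf1 (hides_outside_domV hL).
- by exists (rest_proj eL c); apply: rest_proj_subgraph.
Qed.
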